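(* Let $(R,\mathfrak{m})$ satisfy condition $\bigstar$, and let $S$ be a maximal element of the set of proper subrings of $R$ having the same residue field as $R$. Then $S$ contains the ideal $\mathfrak{m}^2+pR$, the maximal ideal $\mathfrak{m}_S$ of $S$ is an ideal of $R$, and $\mathfrak{m}^2+pR\subseteq\mathfrak{m}_S$.
   Context: All rings are commutative and unital. Condition $\bigstar$ on a ring $(R,\mathfrak{m})$: $R$ is a local ring (unique maximal ideal $\mathfrak{m}$, not necessarily Noetherian) of characteristic $p^N$ for a prime $p$ and some $N\ge 1$, with finite residue field $R/\mathfrak{m}\cong\mathbb{F}_q$, and $\mathfrak{m}$ is a nilpotent ideal. Any subring $S$ of $R$ is local with maximal ideal $\mathfrak{m}_S=\mathfrak{m}\cap S$, and its residue field $S/\mathfrak{m}_S$ is naturally a subfield of $R/\mathfrak{m}$; ''same residue field as $R$'' means equality under this identification. *)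

From HB Require Import structures.
From mathcomp Require Import all_boot all_order all_algebra.
Set Implicit Arguments. Unset Strict Implicit. Unset Printing Implicit Defensive.
Import GRing.Theory.
Local Open Scope ring_scope.

Section Defs.
Variable R : comNzRingType.

Definition is_ideal (I : R -> Prop) : Prop :=
  [/\ I 0, (forall x y, I x -> I y -> I (x + y)) &
      (forall r x, I x -> I (r * x))].

Definition is_maximal_ideal (I : R -> Prop) : Prop :=
  [/\ is_ideal I, ~ I 1 &
      forall J : R -> Prop, is_ideal J -> ~ J 1 -> (forall x, I x -> J x) ->
        forall x, J x -> I x].

Definition local_with (m : R -> Prop) : Prop :=
  is_maximal_ideal m /\
  forall I : R -> Prop, is_maximal_ideal I -> forall x, I x <-> m x.

(* R has characteristic n : the kernel of Z -> R (restricted to nat) is nZ *)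
Definition has_char (n : nat) : Prop :=
  forall k : nat, (k%:R : R) = 0 <-> (n %| k)%N.

(* the residue field R/m is finite: finitely many classes mod m *)
Definition finite_residue (m : R -> Prop) : Prop :=
  exists s : seq R, forall x, exists2 y, y \in s & m (x - y).

(* m is a nilpotent ideal: m^n = 0 for some n, i.e. all products of n
   elements of m vanish *)
Definition nilpotent_ideal (m : R -> Prop) : Prop :=
  exists n : nat, forall s : seq R, size s = n -> (forall x, x \in s -> m x) ->
    \prod_(x <- s) x = 0.

Definition cond_star (m : R -> Prop) (p N : nat) : Prop :=
  [/\ local_with m, [/\ prime p, (1 <= N)%N & has_char (p ^ N)],
      finite_residue m & nilpotent_ideal m].

Definition is_subring (S : R -> Prop) : Prop :=
  [/\ S 1, (forall x y, S x -> S y -> S (x - y)) &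
      (forall x y, S x -> S y -> S (x * y))].

Definition proper_subring (S : R -> Prop) : Prop :=
  is_subring S /\ exists x, ~ S x.

(* S has the same residue field as R: the natural embedding
   S/(m cap S) -> R/m is onto, i.e. every element of R is congruent mod m
   to an element of S *)
Definition same_residue_field (m S : R -> Prop) : Prop :=
  forall x, exists y, S y /\ m (x - y).

Definition maximal_proper_same_residue (m S : R -> Prop) : Prop :=
  [/\ proper_subring S, same_residue_field m S &
      forall T : R -> Prop, proper_subring T -> same_residue_field m T ->
        (forall x, S x -> T x) -> forall x, T x -> S x].

(* The ideal m^2 + pR : finite sums of products of two elements of m,
   plus a multiple of p *)
Definition msq_plus_p (m : R -> Prop) (p : nat) : R -> Prop :=
  fun x => exists (s : seq (R * R)) (r : R),
    (forall ab, ab \in s -> m ab.1 /\ m ab.2) /\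
    x = \sum_(ab <- s) ab.1 * ab.2 + p%:R * r.

Definition max_ideal_sub (m S : R -> Prop) : R -> Prop :=
  fun x => S x /\ m x.

End Defs.

(* Since p^N = 0, p is nilpotent and hence lies in the maximal ideal m, so
   I := m^2 + pR is an ideal contained in m, and S + I is a subring with the
   same residue field as R.  It cannot be all of R: otherwise every element of
   m would be congruent mod m^2 to an element of S ∩ m, and a downward
   induction on the length of products, starting from the nilpotency index of
   m, would put every product of elements of m, in particular m itself, into
   S, forcing S = R.  Maximality of S therefore gives I ⊆ S, and then
   r x = s x + (r - s) x ∈ S for x ∈ m ∩ S and s ∈ S with r ≡ s mod m. *)
From HB Require Import structures.
From mathcomp Require Import all_boot all_order all_algebra.
From mathcomp Require Import ring.
From Stdlib Require Import Classical.
Local Open Scope ring_scope.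
Import GRing.Theory.
Set Implicit Arguments. Unset Strict Implicit.

Section IdealsAndSubrings.
Variable R : comNzRingType.
Implicit Types (I S m : R -> Prop) (x y a : R).

Lemma idealN I : is_ideal I -> forall x, I x -> I (- x).
Proof. by move=> [_ _ IM] x Ix; rewrite -mulN1r; apply: IM. Qed.

Lemma idealB I : is_ideal I -> forall x y, I x -> I y -> I (x - y).
Proof. by move=> HI x y Ix Iy; case: (HI) => _ ID _; apply: ID => //; apply: idealN. Qed.

Lemma idealMr I : is_ideal I -> forall x r, I x -> I (x * r).
Proof. by move=> [_ _ IM] x r Ix; rewrite mulrC; apply: IM. Qed.

Lemma ideal_sum I (T : eqType) (s : seq T) (f : T -> R) :
  is_ideal I -> (forall t, t \in s -> I (f t)) -> I (\sum_(t <- s) f t).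
Proof.
move=> [I0 ID _]; elim: s => [|t s IHs] Hs; first by rewrite big_nil.
rewrite big_cons; apply: ID; first by apply: Hs; rewrite mem_head.
by apply: IHs => u Hu; apply: Hs; rewrite inE Hu orbT.
Qed.

Lemma subring0 S : is_subring S -> S 0.
Proof. by move=> [S1 SB _]; rewrite -(subrr 1); apply: SB. Qed.

Lemma subringD S : is_subring S -> forall x y, S x -> S y -> S (x + y).
Proof.
move=> HS x y Sx Sy; have S0 := subring0 HS; case: HS => _ SB _.
have -> : x + y = x - (0 - y) by rewrite sub0r opprK.
by apply: (SB) => //; apply: SB.
Qed.

Lemma subringM S : is_subring S -> forall x y, S x -> S y -> S (x * y).
Proof. by case. Qed.

Lemma subring_sum S (T : eqType) (s : seq T) (f : T -> R) :
  is_subring S -> (forall t, t \in s -> S (f t)) -> S (\sum_(t <- s) f t).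
Proof.
move=> HS; elim: s => [|t s IHs] Hs; first by rewrite big_nil; apply: subring0.
rewrite big_cons; apply: subringD => //; first by apply: Hs; rewrite mem_head.
by apply: IHs => u Hu; apply: Hs; rewrite inE Hu orbT.
Qed.

Lemma subring_prod S (s : seq R) :
  is_subring S -> (forall x, x \in s -> S x) -> S (\prod_(x <- s) x).
Proof.
move=> [S1 _ SM]; elim: s => [|x s IHs] Hs; first by rewrite big_nil.
rewrite big_cons; apply: SM; first by apply: Hs; rewrite mem_head.
by apply: IHs => y Hy; apply: Hs; rewrite inE Hy orbT.
Qed.

Lemma subring_nat S n : is_subring S -> S n%:R.
Proof.
move=> HS; elim: n => [|n IHn]; first exact: subring0.
by rewrite -addn1 natrD; apply: subringD => //; case: HS.
Qed.

Lemma subring_full_of_residue m S :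
  is_subring S -> same_residue_field m S -> (forall x, m x -> S x) ->
  forall x, S x.
Proof.
move=> HS Sres mS x; have [y [Sy mxy]] := Sres x.
by rewrite -(subrK y x); apply: subringD => //; apply: mS.
Qed.

Definition ideal_add_principal I a : R -> Prop :=
  fun x => exists y r, I y /\ x = y + a * r.

Lemma ideal_add_principal_ideal I a : is_ideal I -> is_ideal (ideal_add_principal I a).
Proof.
move=> [I0 ID IM]; split.
- by exists 0, 0; rewrite mulr0 addr0.
- move=> _ _ [y1 [r1 [Iy1 ->]]] [y2 [r2 [Iy2 ->]]].
  by exists (y1 + y2), (r1 + r2); split; [apply: ID | ring].
- move=> r _ [y [s [Iy ->]]].
  by exists (r * y), (r * s); split; [apply: IM | ring].
Qed.

Definition subring_add_ideal S I : R -> Prop :=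
  fun x => exists s i, [/\ S s, I i & x = s + i].

Lemma subring_add_ideal_subring S I :
  is_subring S -> is_ideal I -> is_subring (subring_add_ideal S I).
Proof.
move=> [S1 SB SM] HI; have [I0 ID IM] := HI; split.
- by exists 1, 0; split; rewrite ?addr0.
- move=> _ _ [s1 [i1 [Ss1 Ii1 ->]]] [s2 [i2 [Ss2 Ii2 ->]]].
  by exists (s1 - s2), (i1 - i2); split; [apply: SB | apply: idealB | ring].
- move=> _ _ [s1 [i1 [Ss1 Ii1 ->]]] [s2 [i2 [Ss2 Ii2 ->]]].
  exists (s1 * s2), (s1 * i2 + s2 * i1 + i1 * i2); split; [exact: SM | | ring].
  by apply: (ID); [apply: (ID)|]; apply: (IM).
Qed.

Lemma one_sub_nilpotent_inv y N : y ^+ N = 0 -> (1 - y) * \sum_(i < N) y ^+ i = 1.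
Proof. by move=> yN0; rewrite -opprB mulNr -subrX1 yN0 sub0r opprK. Qed.

Lemma nilpotent_mem_maximal_ideal m x N :
  is_maximal_ideal m -> x ^+ N = 0 -> m x.
Proof.
move=> [mI m1 mmax] xN0.
have [J1 | notJ1] := classic (ideal_add_principal m x 1).
- case: J1 => y [r [my Ey]]; case: m1.
  rewrite -(one_sub_nilpotent_inv (y := x * r) (N := N)); last by rewrite exprMn xN0 mul0r.
  by apply: idealMr => //; rewrite Ey addrK.
- apply: (mmax _ (ideal_add_principal_ideal x mI) notJ1).
  + by move=> y my; exists y, 0; rewrite mulr0 addr0.
  + by have [m0 _ _] := mI; exists 0, 1; rewrite mulr1 add0r.
Qed.

End IdealsAndSubrings.

Section SquareOfIdeal.
Variable R : comNzRingType.
Variable m : R -> Prop.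
Hypothesis m_ideal : is_ideal m.

Definition ideal_sq : R -> Prop :=
  fun q => exists s : seq (R * R),
    (forall ab, ab \in s -> m ab.1 /\ m ab.2) /\ q = \sum_(ab <- s) ab.1 * ab.2.

Lemma ideal_sq_ideal : is_ideal ideal_sq.
Proof.
have [_ _ mM] := m_ideal; split.
- by exists [::]; rewrite big_nil.
- move=> _ _ [s1 [Hs1 ->]] [s2 [Hs2 ->]]; exists (s1 ++ s2); rewrite big_cat.
  by split=> // ab; rewrite mem_cat => /orP[/Hs1 | /Hs2].
- move=> r _ [s [Hs ->]]; exists [seq (r * ab.1, ab.2) | ab <- s].
  rewrite big_map big_distrr; split; last by apply: eq_bigr => ab _; rewrite /= mulrA.
  by move=> _ /mapP[ab /Hs[ma mb] ->]; split=> //; apply: mM.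
Qed.

Lemma ideal_sq_mul x y : m x -> m y -> ideal_sq (x * y).
Proof.
by move=> mx my; exists [:: (x, y)]; rewrite big_seq1; split=> // ab /[!inE] /eqP->.
Qed.

Lemma ideal_sq_sub q : ideal_sq q -> m q.
Proof.
by move=> [s [Hs ->]]; apply: ideal_sum => // ab /Hs[ma mb]; apply: idealMr.
Qed.

Lemma msq_plus_pE p x :
  msq_plus_p m p x <-> ideal_add_principal ideal_sq p%:R x.
Proof.
split; first by move=> [s [r [Hs ->]]]; exists (\sum_(ab <- s) ab.1 * ab.2), r; split=> //; exists s.
by move=> [_ [r [[s [Hs ->]] ->]]]; exists s, r.
Qed.

Lemma ideal_add_principal_sub a : m a -> forall x, ideal_add_principal ideal_sq a x -> m x.
Proof.
have [_ mD _] := m_ideal.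
by move=> ma _ [q [r [Iq ->]]]; apply: mD; [apply: ideal_sq_sub | apply: idealMr].
Qed.

Variable S : R -> Prop.
Hypothesis S_subring : is_subring S.

Definition products_in (k : nat) : Prop :=
  forall l : seq R, size l = k -> (forall x, x \in l -> m x) -> S (\prod_(x <- l) x).

Lemma ideal_sq_mul_prod k q (l : seq R) :
  products_in k.+2 -> ideal_sq q -> size l = k -> (forall x, x \in l -> m x) ->
  S (q * \prod_(x <- l) x).
Proof.
move=> Pk2 [s [Hs ->]] sz_l ml; rewrite big_distrl /=.
apply: subring_sum => // ab /Hs[ma mb].
rewrite (_ : _ * _ = \prod_(x <- ab.1 :: ab.2 :: l) x); last by rewrite !big_cons mulrA.
apply: Pk2; first by rewrite /= sz_l.
by move=> x /[!inE] /orP[/eqP-> // | /orP[/eqP-> // | /ml]].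
Qed.

Hypothesis m_sub_S_mod_sq : forall a, m a -> exists2 s, S s & ideal_sq (a - s).

(* The factors of l1 have already been moved into S; each factor of l2 is
   replaced by its S-representative, the error landing in a longer product. *)
Lemma products_in_step k : products_in k.+2 -> products_in k.+1.
Proof.
move=> Pk2.
suff prodS : forall l2 l1, (forall x, x \in l1 -> S x /\ m x) -> (forall x, x \in l2 -> m x) ->
    (size l1 + size l2 = k.+1)%N -> S (\prod_(x <- l1) x * \prod_(x <- l2) x).
  by move=> l sz_l ml; have := prodS l [::]; rewrite big_nil mul1r; apply.
elim=> [|a l2 IHl2] l1 Sml1 ml2 sz_l.
  by rewrite big_nil mulr1; apply: subring_prod => // x /Sml1[].
have ma : m a by apply: ml2; rewrite mem_head.
have [s Ss Iqs] := m_sub_S_mod_sq ma.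
have ms : m s by rewrite -(subKr a s); apply: idealB => //; apply: ideal_sq_sub.
have -> : \prod_(x <- l1) x * \prod_(x <- a :: l2) x =
    \prod_(x <- s :: l1) x * \prod_(x <- l2) x + (a - s) * \prod_(x <- l1 ++ l2) x.
  by rewrite !big_cons big_cat /=; ring.
apply: subringD => //.
- apply: IHl2; last by rewrite /= -sz_l addnS.
  + by move=> x /[!inE] /orP[/eqP-> // | /Sml1].
  + by move=> x l2x; apply: ml2; rewrite inE l2x orbT.
- apply: (ideal_sq_mul_prod Pk2 Iqs); first by move: sz_l; rewrite size_cat addnS => -[].
  by move=> x /[!mem_cat] /orP[/Sml1[] // | l2x]; apply: ml2; rewrite inE l2x orbT.
Qed.

Hypothesis m_nilpotent : nilpotent_ideal m.

Lemma nilpotent_ideal_subset_subring x : m x -> S x.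
Proof.
have [n mn0] := m_nilpotent.
have prods_big k : (n <= k)%N -> products_in k.
  move=> nk l sz_l ml; rewrite -(cat_take_drop n l) big_cat /= mn0 ?mul0r.
  - exact: subring0 S_subring.
  - by rewrite size_takel // sz_l.
  - by move=> y /mem_take; apply: ml.
have prods d : forall k, (n <= k + d)%N -> products_in k.+1.
  elim: d => [|d IHd] k nkd; first by apply: prods_big; rewrite addn0 in nkd; apply: leqW.
  by apply: products_in_step; apply: IHd; rewrite addSnnS.
move=> mx; have := prods n 0%N (leq_addl _ _) [:: x] erefl; rewrite big_seq1; apply.
by move=> y /[!inE] /eqP->.
Qed.

End SquareOfIdeal.

Section MaximalSubring.
Variable R : comNzRingType.
Variables m S : R -> Prop.
Hypothesis m_ideal : is_ideal m.
Hypothesis S_residue : same_residue_field m S.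

Lemma subring_add_sq_principal_proper a :
  nilpotent_ideal m -> m a -> S a -> proper_subring S ->
  exists x, ~ subring_add_ideal S (ideal_add_principal (ideal_sq m) a) x.
Proof.
move=> mnil ma Sa [HS [x0 notSx0]].
apply: not_all_ex_not => Tfull; apply: notSx0.
apply: (subring_full_of_residue HS S_residue).
apply: (nilpotent_ideal_subset_subring m_ideal HS) => // b _.
have [s [_ [Ss [q [r [Iq ->]]] ->]]] := Tfull b.
have [s' [Ss' mrs']] := S_residue r.
exists (s + a * s'); first by apply: subringD => //; apply: subringM.
have [_ sqD _] := ideal_sq_ideal m_ideal.
rewrite (_ : _ - _ = q + a * (r - s')); last ring.
by apply: sqD => //; apply: ideal_sq_mul.
Qed.

Lemma maximal_subring_absorbs_ideal I :
  maximal_proper_same_residue m S -> is_ideal I ->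
  (exists x, ~ subring_add_ideal S I x) -> forall x, I x -> S x.
Proof.
move=> [[HS _] Sres Smax] II T_proper x Ix; have [I0 _ _] := II.
apply: (Smax (subring_add_ideal S I)).
- by split=> //; apply: subring_add_ideal_subring.
- by move=> y; have [s [Ss mys]] := Sres y; exists s; split=> //; exists s, 0; rewrite addr0.
- by move=> s Ss; exists s, 0; rewrite addr0.
- by exists 0, x; rewrite add0r; split=> //; apply: subring0.
Qed.

Lemma max_ideal_sub_ideal :
  is_subring S -> (forall x, ideal_sq m x -> S x) -> is_ideal (max_ideal_sub m S).
Proof.
move=> HS sqS; have [m0 mD mM] := m_ideal; split.
- by split=> //; apply: subring0.
- by move=> x y [Sx mx] [Sy my]; split; [apply: subringD | apply: mD].
- move=> r x [Sx mx]; split; last exact: mM.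
  have [s [Ss mrs]] := S_residue r.
  rewrite -(subrK s r) mulrDl; apply: subringD => //; last exact: subringM.
  by apply: sqS; apply: ideal_sq_mul.
Qed.

End MaximalSubring.

Theorem lemma22 (R : comNzRingType) (m : R -> Prop) (p N : nat) (S : R -> Prop) :
  cond_star m p N ->
  maximal_proper_same_residue m S ->
  [/\ (forall x, msq_plus_p m p x -> S x),
      is_ideal (max_ideal_sub m S) &
      (forall x, msq_plus_p m p x -> max_ideal_sub m S x)].
Proof.
move=> [[mmax _] [_ _ charR] _ mnil] Smax.
have [Sprop Sres _] := Smax; have [HS _] := Sprop; have [mI _ _] := mmax.
have mp : m p%:R.
  by apply: (nilpotent_mem_maximal_ideal (N := N) mmax); rewrite -natrX; apply/charR.
have I_ideal := ideal_add_principal_ideal p%:R (ideal_sq_ideal mI).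
have IS := maximal_subring_absorbs_ideal Smax I_ideal
  (subring_add_sq_principal_proper mI Sres mnil mp (subring_nat p HS) Sprop).
have mSS : forall x, msq_plus_p m p x -> max_ideal_sub m S x.
  by move=> x /msq_plus_pE Ix; split; [apply: IS | apply: (ideal_add_principal_sub mI mp Ix)].
split=> //; first by move=> x /mSS[].
apply: (max_ideal_sub_ideal mI Sres HS) => x sqx; apply: IS.
by exists x, 0; rewrite mulr0 addr0.
Qed.
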